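(* For every $\Delta\ge 3$, the classes $\mathrm{coLP}[\mathsf{GRAPH}_\Delta]$ and $\mathrm{NLP}[\mathsf{GRAPH}_\Delta]$ are incomparable with respect to inclusion (neither contains the other); in particular $\mathrm{coLP}$ and $\mathrm{NLP}$ are incomparable.
   Context: Graphs. All graphs are finite, nonempty, simple, undirected and connected, and labeled: a graph is a triple $G=(V(G),E(G),\lambda_G)$ with labeling $\lambda_G:V(G)\to\{0,1\}^*$. $\mathsf{GRAPH}$ is the set of all graphs. A graph property is a subset of $\mathsf{GRAPH}$ closed under label-preserving isomorphism; its complement is $\overline P=\mathsf{GRAPH}\setminus P$. For a class $\mathcal C$ of properties and a set $B$ of graphs, $\mathcal C[B]=\{P\cap B : P\in\mathcal C\}$. $N^G_r(u)$ denotes the subgraph of $G$ induced by the nodes at distance at most $r$ from $u$ (with inherited labels). The structural degree of a node $u$ is $\deg(u)+|\lambda_G(u)|$; $\mathsf{GRAPH}_\Delta$ is the set of graphs all of whose nodes have structural degree at most $\Delta$. Identifiers and certificates. An identifier assignment of $G$ is a map $\mathrm{id}:V(G)\to\{0,1\}^*$; it is $r$-locally unique if $\mathrm{id}(u)\neq\mathrm{id}(v)$ for all distinct nodes $u,v$ at distance at most $2r$. Identifiers are ordered lexicographically (a proper prefix is smaller). A certificate assignment is a map $\kappa:V(G)\to\{0,1\}^*$; for $r\in\mathbb N$ and $p:\mathbb N\to\mathbb N$ it is $(r,p)$-bounded (w.r.t. $(G,\mathrm{id})$) if $|\kappa(u)|\le p\big(\sum_{v\in N^G_r(u)}(1+|\lambda_G(v)|+|\mathrm{id}(v)|)\big)$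 for every node $u$. Distributed Turing machines. Such a machine $M$ is a Turing machine with three one-way-infinite tapes (receiving, internal, sending) over the alphabet $\{\vdash,\square,\#,0,1\}$ (left-end marker, blank, separator, bits), with designated states start, pause, stop. It is executed on a graph $G$ under an (at least $1$-locally unique) identifier assignment $\mathrm{id}$ and a certificate assignment $\kappa$: every node runs its own copy of $M$ in synchronous rounds. In each round, a node $u$ whose neighbors are $v_1,\dots,v_d$ in increasing identifier order (i) gets $m_1\#\cdots\#m_d\#$ on its receiving tape, where $m_i$ is the message sent to it by $v_i$ in the previous round (empty in the first round); (ii) its sending tape is emptied, its internal tape is initialized to $\lambda_G(u)\#\mathrm{id}(u)\#\kappa(u)$ in the first round and otherwise keeps its content, and, unless $u$ reached stop in an earlier round, $M$ runs from state start with all heads leftmost until it enters pause or stop; (iii) $u$ sends to $v_i$ the $i$-th $\#$-separated bit string on its sending tape (the empty string if there is none). The execution terminates once all nodes are in stop. The result $M(G,\mathrm{id},\kappa)$ is $G$ relabeled so that each node gets the bit string on its internal tape (other symbols ignored); $G$ is accepted, written $M(G,\mathrm{id},\kappa)\equiv\mathrm{accept}$, if every node's resulting label is the string $1$. A local-polynomial machine is a distributed Turing machine for which there are a constant $c$ and a polynomial $q$ such that, on every graph and under all identifier and certificate assignments, all nodes reach stop within $c$ rounds, and in every round every node makes at most $q(n)$ computation steps, $n$ being the total length of its receiving- and internal-tape contents at the beginning of the round. Classes. $\mathrm{LP}$ is the class of graph properties $P$ for which there are a local-polynomial machine $M$ and a constant $r_{\mathrm{id}}\ge1$ such that for every graph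 $G$ and every $r_{\mathrm{id}}$-locally unique identifier assignment $\mathrm{id}$, $M$ accepts $G$ under $\mathrm{id}$ (with empty certificates) iff $G\in P$. $\mathrm{NLP}$ is the class of graph properties $P$ for which there exist a local-polynomial machine $M$, constants $r_{\mathrm{id}},r\ge 1$ and a polynomial $p$ such that for every graph $G$ and every $r_{\mathrm{id}}$-locally unique identifier assignment $\mathrm{id}$ of $G$: $G\in P\iff\exists\kappa\,:\,M(G,\mathrm{id},\kappa)\equiv\mathrm{accept}$, $\kappa$ ranging over $(r,p)$-bounded certificate assignments of $(G,\mathrm{id})$. $\mathrm{coLP}=\{\overline P:P\in\mathrm{LP}\}$. *)

From HB Require Import structures.
From mathcomp Require Import all_boot.
Set Implicit Arguments. Unset Strict Implicit. Unset Printing Implicit Defensive.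

Record graph := Graph {
  gV : finType;
  gadj : rel gV;
  glab : gV -> seq bool;
  gadj_irr : irreflexive gadj;
  gadj_sym : symmetric gadj;
  gV_nonempty : 0 < #|gV|;
  g_connected : forall u v : gV, connect gadj u v }.

Definition graph_iso (G H : graph) : Prop :=
  exists f : gV G -> gV H, bijective f /\
    (forall u v, @gadj H (f u) (f v) = @gadj G u v) /\
    (forall u, @glab H (f u) = @glab G u).

Definition is_property (P : graph -> Prop) : Prop :=
  forall G H, graph_iso G H -> P G -> P H.

Fixpoint dist_le (G : graph) (r : nat) (u v : gV G) : bool :=
  match r with
  | 0 => u == v
  | r'.+1 => dist_le r' u v || [exists w, dist_le r' u w && @gadj G w v]
  end.

Definition sdeg (G : graph) (u : gV G) : nat :=
  #|[pred v | @gadj G u v]| + size (@glab G u).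
Definition GRAPH_bdeg (D : nat) (G : graph) : Prop :=
  forall u : gV G, sdeg u <= D.

Definition loc_unique (G : graph) (r : nat) (id : gV G -> seq bool) : Prop :=
  forall u v, u != v -> dist_le (2 * r) u v -> id u != id v.

Fixpoint lexle (s t : seq bool) : bool :=
  match s, t with
  | [::], _ => true
  | _ :: _, [::] => false
  | a :: s', b :: t' => if a == b then lexle s' t' else (~~ a) && b
  end.

(* polynomials with natural coefficients c_0 + c_1 n + ... *)
Definition peval (q : seq nat) (n : nat) : nat :=
  foldr (fun c acc => c + n * acc) 0 q.

Definition cert_bounded (G : graph) (r : nat) (p : seq nat)
    (id kappa : gV G -> seq bool) : Prop :=
  forall u, size (kappa u) <=
    peval p (\sum_(v | dist_le r u v) (1 + size (@glab G v) + size (id v))).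

Inductive sym := Lm | Blank | Sep | B0 | B1.   (* |-, square, #, 0, 1 *)
Inductive dir := DL | DS | DR.

Definition enc (s : seq bool) : seq sym := map (fun b : bool => if b then B1 else B0) s.
Definition bits (s : seq sym) : seq bool :=
  pmap (fun x => match x with B0 => Some false | B1 => Some true | _ => None end) s.

Record dtm := DTM {
  dst : finType;
  q_start : dst; q_pause : dst; q_stop : dst;
  delta : dst -> sym -> sym -> sym -> dst * (sym * sym * sym) * (dir * dir * dir) }.

(* a tape: its cells (cell 0 holds the left-end marker; cells beyond the
   sequence are blank) and a head position *)
Record tape := Tape { tcells : seq sym; thead : nat }.
Definition tread (t : tape) : sym := nth Blank (tcells t) (thead t).
Definition twrite (t : tape) (x : sym) : tape :=
  if thead t == 0 then t else Tape (set_nth Blank (tcells t) (thead t) x) (thead t).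
Definition tmove (t : tape) (d : dir) : tape :=
  match d with
  | DL => Tape (tcells t) (thead t).-1
  | DS => t
  | DR => Tape (tcells t) (thead t).+1
  end.
Definition tact (t : tape) (x : sym) (d : dir) : tape := tmove (twrite t x) d.

Record config (M : dtm) := Cfg { cst : dst M; crecv : tape; cint : tape; csend : tape }.

Definition step (M : dtm) (c : config M) : config M :=
  let: (q', (w1, w2, w3), (d1, d2, d3)) :=
    delta (cst c) (tread (crecv c)) (tread (cint c)) (tread (csend c)) in
  Cfg q' (tact (crecv c) w1 d1) (tact (cint c) w2 d2) (tact (csend c) w3 d3).

Definition halted (M : dtm) (c : config M) : bool :=
  (cst c == q_pause M) || (cst c == q_stop M).

(* start configuration of a round: receiving tape content, internal
   tape content (both including the marker), empty sending tape *)
Definition cfg0 (M : dtm) (recv int : seq sym) : config M :=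
  Cfg (q_start M) (Tape recv 0) (Tape int 0) (Tape [:: Lm] 0).

Definition halts_at (M : dtm) (recv int : seq sym) (k : nat) : Prop :=
  halted (iter k (@step M) (cfg0 M recv int)) /\
  forall j, j < k -> ~~ halted (iter j (@step M) (cfg0 M recv int)).

Record nstate := NS { ns_int : seq sym; ns_send : seq sym; ns_stop : bool }.

Fixpoint segs (s : seq sym) : seq (seq sym) :=
  match s with
  | [::] => [:: [::]]
  | Sep :: s' => [::] :: segs s'
  | x :: s' => match segs s' with h :: t => (x :: h) :: t | [::] => [:: [:: x]] end
  end.

Section Exec.
Variables (M : dtm) (G : graph) (id kappa : gV G -> seq bool).

Definition nbrs (u : gV G) : seq (gV G) :=
  sort (fun v w => lexle (id v) (id w)) (enum [pred v | @gadj G u v]).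

(* message sent by v to u: the i-th #-separated bit string on v's
   sending tape, where u is the i-th neighbor of v *)
Definition msg (S : gV G -> nstate) (v u : gV G) : seq bool :=
  bits (nth [::] (segs (behead (ns_send (S v)))) (index u (nbrs v))).

Definition recv_content (S : gV G -> nstate) (u : gV G) : seq sym :=
  Lm :: flatten [seq enc (msg S v u) ++ [:: Sep] | v <- nbrs u].

Definition init_state (u : gV G) : nstate :=
  NS (Lm :: enc (@glab G u) ++ Sep :: enc (id u) ++ Sep :: enc (kappa u))
     [:: Lm] false.

Definition node_round (recv : seq sym) (s s' : nstate) : Prop :=
  if ns_stop s then s' = NS (ns_int s) [:: Lm] true
  else exists k, halts_at M recv (ns_int s) k /\
    let c := iter k (@step M) (cfg0 M recv (ns_int s)) in
    s' = NS (tcells (cint c)) (tcells (csend c)) (cst c == q_stop M).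

Fixpoint exec (t : nat) (S : gV G -> nstate) : Prop :=
  match t with
  | 0 => forall u, S u = init_state u
  | t'.+1 => exists S0, exec t' S0 /\
              forall u, node_round (recv_content S0 u) (S0 u) (S u)
  end.

Definition accepts : Prop :=
  exists t S, exec t S /\ forall u, ns_stop (S u) /\ bits (ns_int (S u)) = [:: true].

End Exec.

Definition content_len (s : seq sym) : nat := (size s).-1.

Definition local_poly (M : dtm) : Prop :=
  exists (c : nat) (q : seq nat), forall (G : graph) (id kappa : gV G -> seq bool),
    loc_unique 1 id ->
    (exists S, exec M id kappa c S /\ forall u, ns_stop (S u)) /\
    (forall t S, exec M id kappa t S -> forall u, ~~ ns_stop (S u) ->
       exists k, k <= peval q (content_len (recv_content id S u) + content_len (ns_int (S u)))
                 /\ halts_at M (recv_content id S u) (ns_int (S u)) k).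

Definition LP (P : graph -> Prop) : Prop :=
  is_property P /\
  exists (M : dtm) (rid : nat), local_poly M /\ 1 <= rid /\
    forall (G : graph) (id : gV G -> seq bool), loc_unique rid id ->
      (accepts M id (fun _ => [::]) <-> P G).

Definition NLP (P : graph -> Prop) : Prop :=
  is_property P /\
  exists (M : dtm) (rid r : nat) (p : seq nat), local_poly M /\ 1 <= rid /\ 1 <= r /\
    forall (G : graph) (id : gV G -> seq bool), loc_unique rid id ->
      (P G <-> exists kappa, cert_bounded r p id kappa /\ accepts M id kappa).

Definition coLP (P : graph -> Prop) : Prop :=
  exists P', LP P' /\ forall G, P G <-> ~ P' G.

(* C[B] = { P /\ B : P in C } (up to extensional equality) *)
Definition restrict (C : (graph -> Prop) -> Prop) (B : graph -> Prop)
    (Q : graph -> Prop) : Prop :=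
  exists P, C P /\ forall G, Q G <-> (P G /\ B G).

Definition class_incl (C D : (graph -> Prop) -> Prop) : Prop :=
  forall Q, C Q -> D Q.

From mathcomp Require Import all_boot zify.
From Stdlib Require Import Classical FunctionalExtensionality.
Set Implicit Arguments. Unset Strict Implicit. Unset Printing Implicit Defensive.

(* The separating property is "all labels are empty".  It is in LP (a one-
   round machine checks its own label), hence in NLP, and its complement
   "some label is nonempty" is in coLP.  Both inclusions fail because the
   complement is not in NLP, even on GRAPH_3 (by a fooling argument on
   cycles): on a long cycle whose only nonempty label sits at node 0, an
   accepting certificate repeats on two windows far from node 0, and the
   segment between them, closed into a cycle, is accepted although all its
   labels are empty. *)

Lemma lexle_total : total lexle.
Proof. by elim=> [|a s IH] [|b t] //=; case: a; case: b => //=; exact: IH. Qed.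

Lemma lexle_trans : transitive lexle.
Proof.
move=> t s; elim: s t => [|a s IH] [|b t] [|c u] //=.
by case: a; case: b; case: c => //= h1 h2; exact: IH h1 h2.
Qed.

Lemma lexle_anti : antisymmetric lexle.
Proof. by elim=> [|a s IH] [|b t] //=; case: a; case: b => //= /IH ->. Qed.

Lemma mem_nbrs (G : graph) (id : gV G -> seq bool) u v :
  (v \in nbrs id u) = gadj u v.
Proof. by rewrite /nbrs mem_sort mem_enum. Qed.

Lemma dist_le_mono (G : graph) a b (u v : gV G) :
  a <= b -> dist_le a u v -> dist_le b u v.
Proof.
move=> /subnKC <- h; elim: (b - a) => [|k IH]; first by rewrite addn0.
by rewrite addnS /= IH.
Qed.

Lemma loc_unique_mono (G : graph) a b (id : gV G -> seq bool) :
  b <= a -> loc_unique a id -> loc_unique b id.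
Proof. by move=> hb h u v hne hd; apply: h hne _; apply: dist_le_mono hd; lia. Qed.

(* Under 1-local uniqueness, two neighbours of a node with the same
   identifier coincide, since they are at distance at most 2. *)
Lemma nbr_inj (G : graph) (id : gV G -> seq bool) w y u :
  loc_unique 1 id -> gadj w y -> gadj w u -> id y = id u -> y = u.
Proof.
move=> hl hy hu he; apply/eqP; apply/negPn/negP => hne.
suff hd : dist_le (2 * 1) y u by move: (hl _ _ hne hd); rewrite he eqxx.
apply/orP; right; apply/existsP; exists w; rewrite hu andbT.
by apply/orP; right; apply/existsP; exists y; rewrite eqxx gadj_sym.
Qed.

(* Identifiers are injective on the neighbourhood of a node, so ranks in the
   neighbour list can be read off identifiers. *)
Lemma index_map_inj (T1 T2 : eqType) (f : T1 -> T2) s x :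
  (forall y, y \in s -> f y = f x -> y = x) -> index (f x) (map f s) = index x s.
Proof.
elim: s => [|y s IH] //= h.
case: (eqVneq y x) => [->|hne]; first by rewrite eqxx.
have -> : (f y == f x) = false.
  by apply/negbTE/negP => /eqP e; rewrite (h y (mem_head _ _) e) eqxx in hne.
by rewrite IH // => z hz; apply: h; rewrite inE hz orbT.
Qed.

(* The rank of [u] among the neighbours of [w], which selects the message
   [w] sends to [u], is determined by the identifiers. *)
Lemma nbr_rank (G : graph) (id : gV G -> seq bool) w u :
  loc_unique 1 id -> gadj w u -> index u (nbrs id w) = index (id u) (map id (nbrs id w)).
Proof.
move=> hl hwu; rewrite (@index_map_inj _ _ id) // => y.
by rewrite mem_nbrs => hy; exact: nbr_inj hl hy hwu.
Qed.

Lemma halts_at_uniq M recv int k1 k2 :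
  halts_at M recv int k1 -> halts_at M recv int k2 -> k1 = k2.
Proof.
move=> [h1 n1] [h2 n2]; case: (ltngtP k1 k2) => // hlt.
- by move: (n2 _ hlt); rewrite h1.
- by move: (n1 _ hlt); rewrite h2.
Qed.

Lemma node_round_det M recv s s1 s2 :
  node_round M recv s s1 -> node_round M recv s s2 -> s1 = s2.
Proof.
rewrite /node_round; case: ifP => _; first by move=> -> ->.
by move=> [k1 [h1 ->]] [k2 [h2 ->]]; rewrite (halts_at_uniq h1 h2).
Qed.

Lemma sorted_nbr_ids (K : graph) (id : gV K -> seq bool) u :
  map id (nbrs id u) = sort lexle (map id (enum [pred v | gadj u v])).
Proof. by rewrite /nbrs sort_map. Qed.

Lemma size_nbrs_ids (G H : graph) (idG : gV G -> seq bool) (idH : gV H -> seq bool) u v :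
  map idG (nbrs idG u) = map idH (nbrs idH v) -> size (nbrs idG u) = size (nbrs idH v).
Proof. by move=> hm; rewrite -(size_map idG) hm size_map. Qed.

(* This is exactly what a
   node can learn in [t] rounds. *)
Section Views.
Variables (G H : graph) (idG kG : gV G -> seq bool) (idH kH : gV H -> seq bool).

Definition same_data (u : gV G) (v : gV H) : Prop :=
  glab u = glab v /\ idG u = idH v /\ kG u = kH v /\
  map idG (nbrs idG u) = map idH (nbrs idH v).

Fixpoint same_view (t : nat) (u : gV G) (v : gV H) : Prop :=
  same_data u v /\
  match t with 0 => True | s.+1 =>
    forall k, k < size (nbrs idG u) ->
      same_view s (nth u (nbrs idG u) k) (nth v (nbrs idH v) k) end.

Lemma same_view_data t u v : same_view t u v -> same_data u v.
Proof. by case: t => [|t] []. Qed.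

Lemma same_view_pred t u v : same_view t.+1 u v -> same_view t u v.
Proof.
elim: t u v => [|t IH] u v [d h] //=.
by split=> // k hk; apply: IH; exact: h.
Qed.

End Views.

Lemma same_view_refl (G : graph) (id k : gV G -> seq bool) t u :
  same_view id k id k t u u.
Proof. by elim: t u => [|t IH] u /=; split. Qed.

(* Locality: after [t] rounds, the state of a node depends only on its
   radius-[t] view.  Messages are routed by neighbour ranks, which are
   determined by identifiers thanks to 1-local uniqueness. *)
Section Locality.
Variables (M : dtm) (G H : graph).
Variables (idG kG : gV G -> seq bool) (idH kH : gV H -> seq bool).
Hypotheses (uG : loc_unique 1 idG) (uH : loc_unique 1 idH).

Lemma locality t SG SH : exec M idG kG t SG -> exec M idH kH t SH ->
  forall u v, same_view idG kG idH kH t u v -> SG u = SH v.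
Proof.
elim: t SG SH => [|t IH] SG SH /=.
  by move=> hG hH u v [[l [i [k _]]] _]; rewrite hG hH /init_state l i k.
move=> [SG0 [eG rG]] [SH0 [eH rH]] u v hb.
have e0 := IH _ _ eG eH _ _ (same_view_pred hb).
move: hb => [hd hn]; have hsz := size_nbrs_ids hd.2.2.2.
have erecv : recv_content idG SG0 u = recv_content idH SH0 v.
  rewrite /recv_content; congr (_ :: flatten _).
  apply: (@eq_from_nth _ [::]); first by rewrite !size_map.
  move=> n; rewrite size_map => hn'.
  rewrite (nth_map u) // (nth_map v) -?hsz //.
  set w := nth u _ n; set w' := nth v _ n.
  have hbw := hn _ hn'.
  move: (same_view_data hbw) => [_ [_ [_ hmw]]].
  have hwu : gadj w u by rewrite gadj_sym -(mem_nbrs idG) mem_nth.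
  have hwv : gadj w' v by rewrite gadj_sym -(mem_nbrs idH) mem_nth // -hsz.
  rewrite /msg (IH _ _ eG eH _ _ hbw) (nbr_rank uG hwu) (nbr_rank uH hwv).
  by case: hd => [_ [-> _]]; rewrite hmw.
by apply: node_round_det (rG u) _; rewrite erecv e0.
Qed.

Variable R : nat -> gV G -> gV H -> Prop.
Hypothesis R_data : forall t u v, R t u v ->
  glab u = glab v /\ idG u = idH v /\ kG u = kH v.
Hypothesis R_forth : forall t u v, R t u v -> forall u', gadj u u' ->
  exists v', gadj v v' /\ idG u' = idH v' /\ (0 < t -> R t.-1 u' v').
Hypothesis R_back : forall t u v, R t u v -> forall v', gadj v v' ->
  exists u', gadj u u' /\ idG u' = idH v'.

Lemma R_nbr_ids t u v : R t u v -> map idG (nbrs idG u) = map idH (nbrs idH v).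
Proof.
move=> hR; rewrite !sorted_nbr_ids; apply/perm_sortP.
- exact: lexle_total.
- exact: lexle_trans.
- exact: lexle_anti.
apply: uniq_perm.
- rewrite map_inj_in_uniq ?enum_uniq // => x y; rewrite !mem_enum !inE => hx hy.
  exact: nbr_inj uG hx hy.
- rewrite map_inj_in_uniq ?enum_uniq // => x y; rewrite !mem_enum !inE => hx hy.
  exact: nbr_inj uH hx hy.
move=> x; apply/mapP/mapP => [[u' hu' ->]|[v' hv' ->]].
  move: hu'; rewrite mem_enum inE => hu'.
  by have [v' [hv' [e _]]] := R_forth hR hu'; exists v'; rewrite ?mem_enum.
move: hv'; rewrite mem_enum inE => hv'.
by have [u' [hu' e]] := R_back hR hv'; exists u'; rewrite ?mem_enum.
Qed.

Lemma R_same_view t u v : R t u v -> same_view idG kG idH kH t u v.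
Proof.
elim: t u v => [|t IH] u v hR; have [l [i k]] := R_data hR;
  have hm := R_nbr_ids hR; first by [].
split; first by [].
move=> n hn.
have hu' : gadj u (nth u (nbrs idG u) n) by rewrite -(mem_nbrs idG) mem_nth.
have [v' [hv' [e hR']]] := R_forth hR hu'.
have hsz := size_nbrs_ids hm.
have hv'' : gadj v (nth v (nbrs idH v) n) by rewrite -(mem_nbrs idH) mem_nth // -hsz.
have -> : nth v (nbrs idH v) n = v'.
  apply: nbr_inj uH hv'' hv' _.
  by rewrite -(nth_map _ (idH v)) -?hsz // -hm (nth_map u).
exact: IH (hR' isT).
Qed.

End Locality.

Section Outputs.
Variables (M : dtm) (G : graph) (id k : gV G -> seq bool).
Hypothesis uG : loc_unique 1 id.

Lemma exec_det t S1 S2 : exec M id k t S1 -> exec M id k t S2 -> forall u, S1 u = S2 u.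
Proof. by move=> h1 h2 u; apply: (locality uG uG h1 h2); exact: same_view_refl. Qed.

Lemma exec_extend t S : exec M id k t S -> (forall u, ns_stop (S u)) ->
  forall n, exists S', exec M id k (t + n) S' /\
    forall u, ns_stop (S' u) /\ ns_int (S' u) = ns_int (S u).
Proof.
move=> he hs; elim=> [|n [S' [he' hs']]].
  by exists S; rewrite addn0; split => // u; split.
exists (fun u => NS (ns_int (S' u)) [:: Lm] true); rewrite addnS /=; split.
  by exists S'; split => // u; rewrite /node_round; case: (hs' u) => ->.
by move=> u; split => //=; case: (hs' u).
Qed.

Lemma final_int_eq t1 t2 S1 S2 : exec M id k t1 S1 -> (forall u, ns_stop (S1 u)) ->
  exec M id k t2 S2 -> (forall u, ns_stop (S2 u)) ->
  forall u, ns_int (S1 u) = ns_int (S2 u).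
Proof.
wlog le12 : t1 t2 S1 S2 / t1 <= t2.
  move=> W h1 s1 h2 s2 u; case: (leqP t1 t2) => hle; first exact: (W t1 t2).
  by symmetry; apply: (W t2 t1) => //; exact: ltnW.
move=> h1 s1 h2 s2 u.
have [S' [he' hs']] := exec_extend h1 s1 (t2 - t1).
rewrite subnKC // in he'.
by rewrite (exec_det h2 he' u); case: (hs' u).
Qed.

End Outputs.

(* The one-round machine [M0] deciding "the node's own label is empty".
   Its internal tape initially holds |- lab # id # cert.  After skipping
   the marker it inspects the first symbol: a # means the label is empty
   and is overwritten by 1, anything else by a blank; then it blanks the
   rest of the tape and stops.  States: (false,false) start, (false,true)
   inspect, (true,false) erase, (true,true) pause = stop. *)
Definition delta0 (q : bool * bool) (a b c : sym) :
    (bool * bool) * (sym * sym * sym) * (dir * dir * dir) :=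
  match q with
  | (false, false) => ((false, true), (a, b, c), (DS, DR, DS))
  | (false, true) => if b is Sep then ((true, false), (a, B1, c), (DS, DR, DS))
                     else ((true, false), (a, Blank, c), (DS, DR, DS))
  | (true, false) => if b is Blank then ((true, true), (a, b, c), (DS, DS, DS))
                     else ((true, false), (a, Blank, c), (DS, DR, DS))
  | (true, true) => ((true, true), (a, b, c), (DS, DS, DS))
  end.

Definition M0 : dtm :=
  @DTM (bool * bool)%type (false, false) (true, true) (true, true) delta0.

Definition nonblank (x : sym) : bool := if x is Blank then false else true.

Section EraseRun.
Variable recv : seq sym.

Definition erase_cfg (q : bool * bool) (cells : seq sym) (h : nat) : config M0 :=
  @Cfg M0 q (Tape recv 0) (Tape cells h) (Tape [:: Lm] 0).

Lemma set_nth_mid (pre suf : seq sym) x y :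
  set_nth Blank (pre ++ x :: suf) (size pre) y = pre ++ y :: suf.
Proof. by elim: pre => [|a pre IH] //=; rewrite IH. Qed.

Lemma set_nth_end (pre : seq sym) y : set_nth Blank pre (size pre) y = rcons pre y.
Proof. by elim: pre => [|a pre IH] //=; rewrite IH. Qed.

Lemma bits_rcons_blank s : bits (rcons s Blank) = bits s.
Proof. by rewrite /bits -cats1 pmap_cat /= cats0. Qed.

Lemma erase_run suf : forall pre, 0 < size pre -> all nonblank suf ->
  (forall j, j <= size suf ->
     cst (iter j (@step M0) (erase_cfg (true, false) (pre ++ suf) (size pre))) = (true, false)) /\
  exists cells h,
    iter (size suf).+1 (@step M0) (erase_cfg (true, false) (pre ++ suf) (size pre))
      = erase_cfg (true, true) cells h /\ bits cells = bits pre.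
Proof.
elim: suf => [|x suf IH] pre hp.
  move=> _; split; first by case.
  have hn : tread (Tape pre (size pre)) = Blank by rewrite /tread nth_default.
  rewrite cats0 /step /erase_cfg /= hn /= /tact /twrite /=.
  have -> : (size pre == 0) = false by case: (size pre) hp.
  exists (rcons pre Blank), (size pre); split; first by rewrite set_nth_end.
  exact: bits_rcons_blank.
case/andP=> hx hall.
have e1 : @step M0 (erase_cfg (true, false) (pre ++ x :: suf) (size pre)) =
          erase_cfg (true, false) (rcons pre Blank ++ suf) (size (rcons pre Blank)).
  have hx' : tread (Tape (pre ++ x :: suf) (size pre)) = x.
    by rewrite /tread nth_cat ltnn subnn.
  have hz : (size pre == 0) = false by case: (size pre) hp.
  rewrite /step /erase_cfg /= hx'.
  by case: x hx hx' => //= _ _; rewrite /tact /twrite /= hz set_nth_mid cat_rcons size_rcons.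
have hp' : 0 < size (rcons pre Blank) by rewrite size_rcons.
have [IHa [cells [h [IHb IHc]]]] := IH _ hp' hall.
split; first by case=> [|j] hj //; rewrite iterSr e1; apply: IHa.
by exists cells, h; rewrite iterSr e1 IHc bits_rcons_blank.
Qed.

Lemma M0_run x rest : nonblank x -> all nonblank rest ->
  let c := iter (size rest).+3 (@step M0) (cfg0 M0 recv (Lm :: x :: rest)) in
  [/\ halts_at M0 recv (Lm :: x :: rest) (size rest).+3, cst c = (true, true) &
      bits (tcells (cint c)) = (if x is Sep then [:: true] else [::])].
Proof.
move=> hx hr; cbv zeta.
pose y := if x is Sep then B1 else Blank.
have e2 : iter 2 (@step M0) (cfg0 M0 recv (Lm :: x :: rest)) =
          erase_cfg (true, false) ([:: Lm; y] ++ rest) 2.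
  by rewrite /= /step /cfg0 /erase_cfg /= /y; case: x hx {y} => //= _.
have [ha [cells [h [hb hc]]]] := erase_run (pre := [:: Lm; y]) (erefl _) hr.
have ek : iter (size rest).+3 (@step M0) (cfg0 M0 recv (Lm :: x :: rest)) =
          erase_cfg (true, true) cells h by rewrite -addn2 iterD e2.
rewrite ek; split => //; last by rewrite /= hc /y; case: x {ha hb hc e2 ek y} hx.
split; first by rewrite /halted ek.
move=> j hj; rewrite /halted.
by case: j hj => [|[|j]] hj //; rewrite -addn2 iterD e2 ha.
Qed.

End EraseRun.

Definition init_body (G : graph) (id k : gV G -> seq bool) (u : gV G) : seq sym :=
  enc (glab u) ++ Sep :: enc (id u) ++ Sep :: enc (k u).

Lemma all_nonblank_enc s : all nonblank (enc s).
Proof. by elim: s => [|[] s IH]. Qed.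

Lemma init_bodyE (G : graph) (id k : gV G -> seq bool) u :
  exists x rest, init_body id k u = x :: rest /\ nonblank x /\ all nonblank rest /\
    ((if x is Sep then [:: true] else [::]) = [:: true] <-> glab u = [::]).
Proof.
rewrite /init_body; set tail := Sep :: _.
have ht : all nonblank tail by rewrite /tail /= all_cat /= !all_nonblank_enc.
case: (glab u) => [|b l] /=; first by exists Sep, (behead tail).
exists (if b then B1 else B0), (enc l ++ tail).
by rewrite all_cat all_nonblank_enc ht; case: b.
Qed.

Definition M0_state (G : graph) (id k : gV G -> seq bool) (u : gV G) : nstate :=
  let c := iter (size (init_body id k u)).+2 (@step M0)
             (cfg0 M0 (recv_content id (init_state id k) u) (Lm :: init_body id k u)) in
  NS (tcells (cint c)) (tcells (csend c)) true.

Lemma M0_exec1 (G : graph) (id k : gV G -> seq bool) :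
  exec M0 id k 1 (M0_state id k) /\
  forall u, ns_stop (M0_state id k u) /\
    (bits (ns_int (M0_state id k u)) = [:: true] <-> glab u = [::]).
Proof.
split.
  exists (init_state id k); split => // u; rewrite /node_round /= -/(init_body id k u).
  have [x [rest [e [hx [hr _]]]]] := init_bodyE id k u.
  have [ha hb _] := M0_run (recv_content id (init_state id k) u) hx hr.
  by exists (size rest).+3; rewrite /M0_state e /= hb.
move=> u; split => //.
have [x [rest [e [hx [hr hout]]]]] := init_bodyE id k u.
have [_ _ hc] := M0_run (recv_content id (init_state id k) u) hx hr.
by rewrite /M0_state /= e /= hc.
Qed.

Lemma M0_local_poly : local_poly M0.
Proof.
exists 1, [:: 2; 1] => G id k _; split.
  by exists (M0_state id k); have [h1 h2] := M0_exec1 id k; split => // u; case: (h2 u).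
case=> [|t] S /=.
  move=> hS u _.
  have [x [rest [e [hx [hr _]]]]] := init_bodyE id k u.
  have [ha _ _] := M0_run (recv_content id S u) hx hr.
  exists (size rest).+3; split; last by rewrite hS /init_state /= -/(init_body id k u) e.
  rewrite /content_len /= muln0 addn0 muln1 hS /init_state /=.
  rewrite -/(init_body id k u) e /=; lia.
move=> [S0 [_ hr]] u; move: (hr u); rewrite /node_round.
case: ifP => _; first by move=> ->.
by move=> [k0 [[hh _] ->]] /=; move: hh; rewrite /halted /= orbb => ->.
Qed.

Lemma M0_accepts (G : graph) (id k : gV G -> seq bool) : loc_unique 1 id ->
  (accepts M0 id k <-> forall u : gV G, glab u = [::]).
Proof.
move=> hu; have [e1 s1] := M0_exec1 id k.
have stop1 u : ns_stop (M0_state id k u) by case: (s1 u).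
split.
  move=> [t [S [he hs]]] u; apply/(s1 u).2.
  by rewrite (final_int_eq hu e1 stop1 he (fun u => proj1 (hs u))); exact: proj2 (hs u).
by move=> h; exists 1, (M0_state id k); split => // u; split => //; apply/(s1 u).2.
Qed.

Definition unary_code (K x : nat) : seq bool := nseq x true ++ nseq (K - x) false.

Lemma unary_code_inj K x y : unary_code K x = unary_code K y -> x = y.
Proof. by move/(congr1 (count id)); rewrite /unary_code !count_cat !count_nseq /=; lia. Qed.

Lemma size_unary_code K x : x <= K -> size (unary_code K x) = K.
Proof. by move=> h; rewrite /unary_code size_cat !size_nseq; lia. Qed.

Lemma modS_cases n x : x < n ->
  (x.+1 < n /\ x.+1 %% n = x.+1) \/ (x.+1 = n /\ x.+1 %% n = 0).
Proof.
move=> hx; case: (ltnP x.+1 n) => h; first by left; rewrite modn_small.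
right; have e : x.+1 = n by lia.
by rewrite e modnn.
Qed.

Section Cycle.
Variable m : nat.
Hypothesis hm : 1 < m.

Definition cadj : rel 'I_m.+1 :=
  fun u v => (nat_of_ord v == (nat_of_ord u).+1 %% m.+1) || (nat_of_ord u == (nat_of_ord v).+1 %% m.+1).

Lemma cadjP (u v : 'I_m.+1) : cadj u v <->
  (nat_of_ord v = (nat_of_ord u).+1 \/ ((nat_of_ord u).+1 = m.+1 /\ nat_of_ord v = 0) \/
   nat_of_ord u = (nat_of_ord v).+1 \/ ((nat_of_ord v).+1 = m.+1 /\ nat_of_ord u = 0)).
Proof.
rewrite /cadj.
have [[h1 e1]|[h1 e1]] := modS_cases (ltn_ord u);
have [[h2 e2]|[h2 e2]] := modS_cases (ltn_ord v); rewrite e1 e2.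
all: split; [move=> /orP [/eqP h|/eqP h]; lia|].
all: move=> h; apply/orP; case: h => [h|[h|[h|h]]];
  first [left; apply/eqP; lia | right; apply/eqP; lia].
Qed.

Lemma cadj_irr : irreflexive cadj.
Proof. by move=> u; apply/negP => /cadjP h; lia. Qed.

Lemma cadj_sym : symmetric cadj.
Proof. by move=> u v; rewrite /cadj orbC. Qed.

Lemma cyc_nonempty : 0 < #|'I_m.+1|.
Proof. by rewrite card_ord. Qed.

Lemma cyc_connect0 k (hk : k < m.+1) : connect cadj ord0 (Ordinal hk).
Proof.
elim: k hk => [|k IH] hk; first by have -> : Ordinal hk = ord0 by apply: val_inj.
have hk' : k < m.+1 by lia.
by apply: connect_trans (IH hk') _; apply: connect1; apply/cadjP; left => /=; lia.
Qed.

Lemma cyc_connect (u v : 'I_m.+1) : connect cadj u v.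
Proof.
apply: (@connect_trans _ _ ord0).
  by rewrite (sym_connect_sym cadj_sym); case: u => k hk; exact: cyc_connect0.
by case: v => k hk; exact: cyc_connect0.
Qed.

Definition cyc (lab : 'I_m.+1 -> seq bool) : graph :=
  @Graph _ cadj lab cadj_irr cadj_sym cyc_nonempty cyc_connect.

Definition sucn (u : 'I_m.+1) : 'I_m.+1 := inord (if nat_of_ord u == m then 0 else (nat_of_ord u).+1).
Definition pren (u : 'I_m.+1) : 'I_m.+1 := inord (if nat_of_ord u == 0 then m else (nat_of_ord u).-1).

Lemma sucnE u : nat_of_ord (sucn u) = if nat_of_ord u == m then 0 else (nat_of_ord u).+1.
Proof. by rewrite /sucn inordK //; case: ifP => /eqP; have := ltn_ord u; lia. Qed.

Lemma prenE u : nat_of_ord (pren u) = if nat_of_ord u == 0 then m else (nat_of_ord u).-1.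
Proof. by rewrite /pren inordK //; case: ifP => /eqP; have := ltn_ord u; lia. Qed.

Lemma sucn_val (z : 'I_m.+1) : z < m -> sucn z = inord z.+1.
Proof. by move=> h; apply: val_inj; rewrite /= sucnE inordK ?ifN //; apply/eqP; lia. Qed.

Lemma pren_val (z : 'I_m.+1) : 0 < z -> pren z = inord z.-1.
Proof. by move=> h; apply: val_inj; rewrite /= prenE inordK ?ifN //; have := ltn_ord z; lia. Qed.

Lemma cadj_sucn u : cadj u (sucn u).
Proof. by apply/cadjP; rewrite sucnE; case: ifP => /eqP; have := ltn_ord u; lia. Qed.

Lemma cadj_pren u : cadj u (pren u).
Proof. by apply/cadjP; rewrite prenE; case: ifP => /eqP; have := ltn_ord u; lia. Qed.

Lemma cadj_cases u v : cadj u v -> v = sucn u \/ v = pren u.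
Proof.
move/cadjP => h; have hu := ltn_ord u; have hv := ltn_ord v.
have es := sucnE u; have ep := prenE u.
suff : nat_of_ord v = sucn u \/ nat_of_ord v = pren u by case=> e; [left|right]; apply: val_inj.
by move: es ep; do 2 case: ifP => /eqP ?; lia.
Qed.

Lemma cyc_deg (u : 'I_m.+1) : #|[pred v | cadj u v]| <= 2.
Proof.
apply: leq_trans (_ : #|[set sucn u; pren u]| <= 2); last by rewrite cards2; case: (_ != _).
apply: subset_leq_card; apply/subsetP => v; rewrite inE => /cadj_cases [->|->];
by rewrite !inE eqxx ?orbT.
Qed.

Lemma cyc_bdeg (lab : 'I_m.+1 -> seq bool) :
  (forall v, size (lab v) <= 1) -> GRAPH_bdeg 3 (cyc lab).
Proof. by move=> hl u; rewrite /sdeg; have := cyc_deg u; have := hl u; simpl; lia. Qed.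

(* [offset a b d] : going [d] steps forward from [b] leads to [a]. *)
Definition offset (a b d : nat) := a = b + d \/ a + m.+1 = b + d.

Section Distances.
Variable lab : 'I_m.+1 -> seq bool.

Lemma dist_cyc r (u v : 'I_m.+1) : r < m -> @dist_le (cyc lab) r u v ->
  exists d, d <= r /\ (offset v u d \/ offset u v d).
Proof.
rewrite /offset; elim: r v => [|r IH] v hr /=.
  by move/eqP => ->; exists 0; lia.
have {}IH := fun v => IH v (ltnW hr).
case/orP => [/IH [d [hd h]]|/existsP [w /andP [/IH [d [hd h]] /cadjP ha]]].
  by exists d; split => //; lia.
have hu := ltn_ord u; have hv := ltn_ord v; have hw := ltn_ord w.
case: h => [[h|h]|[h|h]]; case: ha => [ha|[ha|[ha|ha]]];
  first [exists d.+1; lia | exists d.-1; lia | exists 1; lia | exists 0; lia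
        | (destruct d; [exists 1; lia | exists d; lia])].
Qed.

Lemma offset_dist_fwd d (u w : 'I_m.+1) : offset w u d -> @dist_le (cyc lab) d u w.
Proof.
rewrite /offset; elim: d w => [|d IH] w h /=.
  by have := ltn_ord u; have := ltn_ord w => hw hu; apply/eqP; apply: val_inj => /=; lia.
apply/orP; right; apply/existsP; exists (pren w); apply/andP; split.
  apply: IH; have := prenE w; have := ltn_ord u; have := ltn_ord w => hw hu.
  by case: ifP => /eqP ? ->; lia.
by apply/cadjP; have := prenE w; have := ltn_ord w => hw; case: ifP => /eqP ? ->; lia.
Qed.

Lemma offset_dist_bwd d (u w : 'I_m.+1) : offset u w d -> @dist_le (cyc lab) d u w.
Proof.
rewrite /offset; elim: d w => [|d IH] w h /=.
  by have := ltn_ord u; have := ltn_ord w => hw hu; apply/eqP; apply: val_inj => /=; lia.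
apply/orP; right; apply/existsP; exists (sucn w); apply/andP; split.
  apply: IH; have := sucnE w; have := ltn_ord u; have := ltn_ord w => hw hu.
  by case: ifP => /eqP ? ->; lia.
by apply/cadjP; have := sucnE w; have := ltn_ord w => hw; case: ifP => /eqP ? ->; lia.
Qed.

Definition fnode (u : 'I_m.+1) d : 'I_m.+1 := inord (if u + d < m.+1 then u + d else u + d - m.+1).
Definition bnode (u : 'I_m.+1) d : 'I_m.+1 := inord (if d <= u then u - d else u + m.+1 - d).

Lemma fnodeE u d : d <= m.+1 -> nat_of_ord (fnode u d) = if u + d < m.+1 then u + d else u + d - m.+1.
Proof. by move=> hd; rewrite /fnode inordK //; have := ltn_ord u; case: ifP; lia. Qed.

Lemma bnodeE u d : d <= m.+1 -> nat_of_ord (bnode u d) = if d <= u then u - d else u + m.+1 - d.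
Proof. by move=> hd; rewrite /bnode inordK //; have := ltn_ord u; case: ifP; lia. Qed.

Lemma ball_le r (u : 'I_m.+1) : r < m ->
  #|[set v | @dist_le (cyc lab) r u v]| <= r.*2.+1.
Proof.
move=> hr.
apply: leq_trans (_ : #|[set fnode u (nat_of_ord d) | d : 'I_r.+1] :|:
                       [set bnode u (nat_of_ord d).+1 | d : 'I_r]| <= _).
  apply: subset_leq_card; apply/subsetP => v; rewrite inE => /(dist_cyc hr) [d [hd h]].
  have hu := ltn_ord u; have hv := ltn_ord v; rewrite /offset in h.
  case: h => h.
    apply/setUP; left; apply/imsetP; exists (@Ordinal r.+1 d hd) => //.
    by apply: val_inj; rewrite /= fnodeE; last lia; case: ifP; lia.
  case: d hd h => [|d] hd h.
    apply/setUP; left; apply/imsetP; exists (@Ordinal r.+1 0 (ltn0Sn _)) => //.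
    by apply: val_inj; rewrite /= fnodeE; last lia; case: ifP; lia.
  apply/setUP; right; apply/imsetP; exists (@Ordinal r d hd) => //.
  by apply: val_inj; rewrite /= bnodeE; last lia; case: ifP; lia.
apply: leq_trans (leq_card_setU _ _) _.
rewrite -addnn -addSn; apply: leq_add;
by apply: leq_trans (leq_imset_card _ _) _; rewrite card_ord.
Qed.

Definition ball_node (u : 'I_m.+1) r (e : nat) : 'I_m.+1 :=
  if e < r then bnode u (r - e) else fnode u (e - r).

Lemma ball_ge r (u : 'I_m.+1) : r.*2 < m.+1 ->
  r.*2.+1 <= #|[set v | @dist_le (cyc lab) r u v]|.
Proof.
move=> hr.
have inj : injective (fun e : 'I_r.*2.+1 => ball_node u r e).
  move=> e1 e2; rewrite /ball_node => h; apply: val_inj => /=.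
  have hu := ltn_ord u; have h1 := ltn_ord e1; have h2 := ltn_ord e2.
  move: (congr1 (@nat_of_ord _) h).
  by case: ifP => c1; case: ifP => c2; rewrite ?fnodeE ?bnodeE; try lia; do 2 case: ifP; lia.
rewrite -[X in X <= _](card_ord r.*2.+1) -(card_imset _ inj).
apply: subset_leq_card; apply/subsetP => v /imsetP [e _ ->]; rewrite inE.
have he := ltn_ord e; have hu := ltn_ord u.
rewrite /ball_node; case: ifP => c.
  apply: (@dist_le_mono _ (r - e)); first lia.
  by apply: offset_dist_bwd; rewrite /offset bnodeE; last lia; case: ifP; lia.
apply: (@dist_le_mono _ (e - r)); first lia.
by apply: offset_dist_fwd; rewrite /offset fnodeE; last lia; case: ifP; lia.
Qed.

Lemma offset_mod K a b d : K %| m.+1 -> d < K -> offset a b d ->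
  a %% K = b %% K -> d = 0.
Proof.
move=> hK hd h e.
have e2 : (b + d) %% K = (b + 0) %% K.
  case: h => <-; first by rewrite addn0.
  by rewrite addn0 -modnDmr (eqP hK) addn0.
by move/eqP: e2; rewrite eqn_modDl mod0n modn_small // => /eqP.
Qed.

Lemma cyc_loc_unique rid K : K = (2 * rid).+1 -> K %| m.+1 -> 2 * rid < m ->
  @loc_unique (cyc lab) rid (fun z => unary_code K (z %% K)).
Proof.
move=> hK hdv hr u v hne /(dist_cyc hr) [d [hd h]].
apply/negP => /eqP /unary_code_inj e.
have hu := ltn_ord u; have hv := ltn_ord v; have hdK : d < K by lia.
suff : nat_of_ord u = v by move=> /val_inj ee; rewrite ee eqxx in hne.
case: h => h.
  by have d0 := offset_mod hdv hdK h (esym e); rewrite /offset d0 in h; lia.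
by have d0 := offset_mod hdv hdK h e; rewrite /offset d0 in h; lia.
Qed.

End Distances.
End Cycle.

Lemma modD_dvd K a x : K %| x -> (a + x) %% K = a %% K.
Proof. by move=> h; rewrite -modnDmr (eqP h) addn0. Qed.

(* In the cycle of length [m+1] with a single nonempty
   label at node 0, identifiers [z mod K] and certificates [kC], take two
   positions [i < j] that are multiples of [K], far from node 0, around
   which the certificates agree on a window of radius [c+1].  Gluing the
   segment [i, j) into a cycle of length [j - i] (all labels empty,
   identifiers [y mod K], certificates [kC (i + y)]) gives a graph in which
   every node has the same radius-[c] view as its copy in the big cycle. *)
Section CutAndPaste.
Variables (m m' c i j : nat) (hm : 1 < m) (hm' : 1 < m').
Hypotheses (hL : m'.+1 = j - i) (hi : c.+2 <= i) (hjn : j + c.+2 <= m) (hLc : c.+2 < m'.+1).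

(* [copy y z] : node [y] of the small cycle is a copy of node [z], read
   from position [i]; positions just outside [i, j) wrap around. *)
Definition copy (y : 'I_m'.+1) (z : 'I_m.+1) : Prop :=
  (i <= z /\ z < j /\ y + i = z) \/ (j <= z /\ y + j = z) \/ (z < i /\ y + i = z + m'.+1).

(* The simulation relation: at level [t], [z] lies within [c - t] of the window. *)
Definition copy_rel (t : nat) (y : 'I_m'.+1) (z : 'I_m.+1) : Prop :=
  t <= c /\ i <= z + (c - t) /\ z < j + (c - t) /\ copy y z.

Lemma copy_sucn t y z : copy_rel t y z -> copy (sucn y) (inord z.+1 : 'I_m.+1).
Proof.
move=> [h1 [h2 [h3 hr]]]; rewrite /copy inordK; last lia.
have hy := ltn_ord y; rewrite (sucnE hm').
case: hr => [[a1 [a2 a3]]|[[a1 a2]|[a1 a2]]]; case: ifP => /eqP a4.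
all: first [left; lia | right; left; lia | right; right; lia].
Qed.

Lemma copy_pren t y z : copy_rel t y z -> copy (pren y) (inord z.-1 : 'I_m.+1).
Proof.
move=> [h1 [h2 [h3 hr]]]; rewrite /copy inordK; last by have := ltn_ord z; lia.
have hy := ltn_ord y; rewrite (prenE hm').
case: hr => [[a1 [a2 a3]]|[[a1 a2]|[a1 a2]]]; case: ifP => /eqP a4.
all: first [left; lia | right; left; lia | right; right; lia].
Qed.

Variables (K : nat) (kC : 'I_m.+1 -> seq bool).
Hypotheses (hKi : K %| i) (hKL : K %| m'.+1).

Definition kn (x : nat) : seq bool := kC (inord x).
Hypothesis window : forall e, e < c.*2.+2 -> kn (i - c.+1 + e) = kn (j - c.+1 + e).

Definition labC (z : 'I_m.+1) : seq bool := if nat_of_ord z == 0 then [:: true] else [::].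
Definition idC (z : 'I_m.+1) : seq bool := unary_code K (z %% K).
Definition idC' (y : 'I_m'.+1) : seq bool := unary_code K (y %% K).
Definition kC' (y : 'I_m'.+1) : seq bool := kn (i + y).
Definition GC : graph := cyc hm labC.
Definition GC' : graph := cyc hm' (fun _ => [::]).

Lemma copy_data (y : 'I_m'.+1) (z : 'I_m.+1) : i <= z + c.+1 -> z < j + c.+1 -> copy y z ->
  [::] = labC z /\ idC' y = idC z /\ kC' y = kC z.
Proof.
move=> h1 h2 hr; have hy := ltn_ord y.
have hKj : K %| j.
  have -> : j = i + m'.+1 by lia.
  by rewrite dvdn_add.
split; first by rewrite /labC ifN //; apply/eqP; lia.
split.
  rewrite /idC' /idC; congr (unary_code K _).
  case: hr => [[_ [_ <-]]|[[_ <-]|[_ e]]]; first by rewrite modD_dvd.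
    by rewrite modD_dvd.
  by rewrite -(modD_dvd _ hKi) e modD_dvd.
have -> : kC z = kn z by rewrite /kn inord_val.
rewrite /kC'.
case: hr => [[_ [_ <-]]|[[_ e]|[h3 e]]]; first by rewrite addnC.
  have he : c.+1 + y < c.*2.+2 by lia.
  have := window he.
  have -> : i - c.+1 + (c.+1 + y) = i + y by lia.
  by have -> : j - c.+1 + (c.+1 + y) = z by lia.
have he : z - (i - c.+1) < c.*2.+2 by lia.
have := window he.
have -> : i - c.+1 + (z - (i - c.+1)) = z by lia.
by have -> : j - c.+1 + (z - (i - c.+1)) = i + y by lia.
Qed.

Hypotheses (uC : @loc_unique GC 1 idC) (uC' : @loc_unique GC' 1 idC').

Lemma copy_rel_same_view t y z : copy_rel t y z -> @same_view GC' GC idC' kC' idC kC t y z.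
Proof.
apply: (@R_same_view GC' GC idC' kC' idC kC uC' uC copy_rel).
- move=> t0 u v [a1 [a2 [a3 a4]]].
  by have [b1 [b2 b3]] := copy_data (y := u) (z := v) ltac:(lia) ltac:(lia) a4.
- move=> t0 u v hR u' /(cadj_cases hm') [->|->].
    have hr := copy_sucn hR; have [a1 [a2 [a3 a4]]] := hR.
    exists (inord v.+1); split; first by apply/(cadjP hm); left; rewrite inordK //; lia.
    split; first by have [_ [-> _]] := copy_data (y := sucn u) (z := inord v.+1)
      ltac:(rewrite inordK; lia) ltac:(rewrite inordK; lia) hr.
    move=> ht; rewrite /copy_rel inordK; last lia.
    by do 3 (split; first lia); move: hr; rewrite /copy inordK //; lia.
  have hr := copy_pren hR; have [a1 [a2 [a3 a4]]] := hR; have hv := ltn_ord v.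
  exists (inord v.-1); split.
    by apply/(cadjP hm); right; right; left; rewrite inordK //; lia.
  split; first by have [_ [-> _]] := copy_data (y := pren u) (z := inord v.-1)
      ltac:(rewrite inordK; lia) ltac:(rewrite inordK; lia) hr.
  move=> ht; rewrite /copy_rel inordK; last lia.
  by do 3 (split; first lia); move: hr; rewrite /copy inordK //; lia.
- move=> t0 u v hR v' /(cadj_cases hm) [->|->].
    have hr := copy_sucn hR; have [a1 [a2 [a3 a4]]] := hR.
    exists (sucn u); split; first exact: cadj_sucn.
    rewrite (sucn_val hm); last lia.
    by have [_ [-> _]] := copy_data (y := sucn u) (z := inord v.+1)
      ltac:(rewrite inordK; lia) ltac:(rewrite inordK; lia) hr.
  have hr := copy_pren hR; have [a1 [a2 [a3 a4]]] := hR; have hv := ltn_ord v.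
  exists (pren u); split; first exact: cadj_pren.
  rewrite (pren_val hm); last lia.
  by have [_ [-> _]] := copy_data (y := pren u) (z := inord v.-1)
      ltac:(rewrite inordK; lia) ltac:(rewrite inordK; lia) hr.
Qed.

Lemma cut_same_view (y : 'I_m'.+1) : @same_view GC' GC idC' kC' idC kC c y (inord (i + y)).
Proof.
have hy := ltn_ord y.
apply: copy_rel_same_view; rewrite /copy_rel /copy inordK; last lia.
by rewrite subnn !addn0; do 3 (split; first lia); left; lia.
Qed.

Lemma cut_accepts (M : dtm) :
  (forall (G : graph) (id kappa : gV G -> seq bool), loc_unique 1 id ->
     exists S, exec M id kappa c S /\ forall u, ns_stop (S u)) ->
  @accepts M GC idC kC -> @accepts M GC' idC' kC'.
Proof.
move=> hterm [t [St [ext hst]]].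
have [Sc [exc stc]] := hterm GC idC kC uC.
have out z : bits (ns_int (Sc z)) = [:: true].
  by rewrite -(final_int_eq uC ext (fun u => (hst u).1) exc stc z); exact: (hst z).2.
have [S' [ex' st']] := hterm GC' idC' kC' uC'.
exists c, S'; split => // y; split; first exact: st'.
by rewrite (locality uC' uC ex' exc (cut_same_view y)) out.
Qed.

End CutAndPaste.

Lemma peval_mono p a b : a <= b -> peval p a <= peval p b.
Proof. by move=> h; elim: p => [|x p IH] //=; rewrite leq_add2l; exact: leq_mul. Qed.

(* The quantity bounding certificate sizes on a cycle with identifiers
   [z mod K]: every node of a radius-[r] ball contributes about [K+1]. *)
Section BallWeight.
Variables (m K r : nat) (hm : 1 < m) (lab : 'I_m.+1 -> seq bool).
Hypothesis hK : 0 < K.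

Definition ball_weight (z : 'I_m.+1) : nat :=
  \sum_(v | @dist_le (cyc hm lab) r z v) (1 + size (lab v) + size (unary_code K (v %% K))).

Lemma size_id_code (v : nat) : size (unary_code K (v %% K)) = K.
Proof. by rewrite size_unary_code //; apply/ltnW/ltn_pmod. Qed.

Lemma ball_weight_ge z : r.*2 < m.+1 -> (forall v, lab v = [::]) ->
  r.*2.+1 * K.+1 <= ball_weight z.
Proof.
move=> hr hl; rewrite /ball_weight (eq_bigr (fun _ => K.+1)); last first.
  by move=> v _; rewrite hl size_id_code /=; lia.
by rewrite sum_nat_cond_const leq_mul2r ball_ge ?orbT.
Qed.

Lemma ball_weight_le z : r < m ->
  (forall v, @dist_le (cyc hm lab) r z v -> lab v = [::]) ->
  ball_weight z <= r.*2.+1 * K.+1.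
Proof.
move=> hr hl; rewrite /ball_weight (eq_bigr (fun _ => K.+1)); last first.
  by move=> v hv; rewrite hl // size_id_code /=; lia.
by rewrite sum_nat_cond_const leq_mul2r ball_le ?orbT.
Qed.

Lemma ball_weight_small_labels z : r < m -> (forall v, size (lab v) <= 1) ->
  ball_weight z <= r.*2.+1 * K.+2.
Proof.
move=> hr hl; rewrite /ball_weight.
apply: leq_trans (_ : \sum_(v | @dist_le (cyc hm lab) r z v) K.+2 <= _).
  by apply: leq_sum => v _; rewrite size_id_code; have := hl v; lia.
by rewrite sum_nat_cond_const leq_mul2r ball_le ?orbT.
Qed.

End BallWeight.

(* Certificates of the big cycle, restricted to the cut segment, stay
   within the bound for the small cycle: away from node 0 both cycles look
   the same up to distance [r]. *)
Lemma cut_cert_bounded m m' K r p i j (hm : 1 < m) (hm' : 1 < m') (kC : 'I_m.+1 -> seq bool) :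
  0 < K -> m'.+1 = j - i -> r < i -> j + r <= m -> r.*2 < m'.+1 ->
  @cert_bounded (GC hm) r p (idC K) kC -> @cert_bounded (GC' hm') r p (idC' K) (kC' i kC).
Proof.
move=> hK hL hri hjr h2r hcb y; have hy := ltn_ord y.
have hrm : r < m by lia.
have hz : nat_of_ord (inord (i + y) : 'I_m.+1) = i + y by rewrite inordK //; lia.
apply: leq_trans (hcb (inord (i + y))) _; apply: peval_mono.
apply: leq_trans (_ : r.*2.+1 * K.+1 <= _).
  apply: (@ball_weight_le m K r hm (@labC m) hK _ hrm) => v /(dist_cyc hrm) [d [hd hc]].
  by rewrite /labC ifN //; have hv := ltn_ord v; rewrite /offset hz in hc; apply/eqP; lia.
exact: (@ball_weight_ge m' K r hm' (fun _ => [::]) hK y h2r (fun _ => erefl)).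
Qed.

Lemma pigeonhole (T : finType) (f : 'I_#|T|.+1 -> T) :
  exists lo hi : 'I_#|T|.+1, lo < hi /\ f lo = f hi.
Proof.
have : ~~ injectiveb f.
  apply/injectiveP => hinj; have := leq_card f hinj.
  by rewrite card_ord ltnn.
move/injectivePn => [a1 [a2 hne hf]].
case: (ltngtP a1 a2) => h; [by exists a1, a2 | by exists a2, a1 |].
by move: hne; rewrite (val_inj h) eqxx.
Qed.

Definition bounded_code (b : nat) (s : seq bool) : 'I_b.+1 * {ffun 'I_b -> bool} :=
  (inord (size s), [ffun t : 'I_b => nth false s t]).

Lemma bounded_code_inj b s1 s2 : size s1 <= b -> size s2 <= b ->
  bounded_code b s1 = bounded_code b s2 -> s1 = s2.
Proof.
move=> h1 h2 [e1 e2].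
have es : size s1 = size s2 by move: (congr1 (@nat_of_ord _) e1); rewrite !inordK.
apply: (eq_from_nth (x0 := false) es) => k hk.
have hkb : k < b by lia.
by move: (congr1 (fun g : {ffun 'I_b -> bool} => g (Ordinal hkb)) e2); rewrite !ffunE.
Qed.

(* On a very long cycle with one nonempty
   label, the certificates of the windows around the positions [S*(a+1)]
   repeat (pigeonhole); cutting the cycle between two such positions gives
   a cycle without nonempty labels that is still accepted. *)
Section Fooling.
Variables (M : dtm) (c rid r : nat) (p : seq nat) (X : graph -> Prop).
Hypothesis hrid : 1 <= rid.
Hypothesis hterm : forall (G : graph) (id kappa : gV G -> seq bool), loc_unique 1 id ->
  exists S, exec M id kappa c S /\ forall u, ns_stop (S u).
Hypothesis hX : forall (G : graph) (id : gV G -> seq bool), loc_unique rid id ->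
  (X G <-> exists kappa, cert_bounded r p id kappa /\ accepts M id kappa).
Hypothesis hB : forall G, GRAPH_bdeg 3 G -> (X G <-> exists u : gV G, glab u != [::]).

Let K := (2 * rid).+1.

Lemma cut_contradiction m (hm : 1 < m) (kap : 'I_m.+1 -> seq bool) i j :
  (c + r + K).*2 < i -> (c + r + K).*2 < j - i -> j + (c + r + K).*2 < m ->
  K %| i -> K %| j - i -> K %| m.+1 ->
  @cert_bounded (GC hm) r p (idC K) kap -> @accepts M (GC hm) (idC K) kap ->
  (forall e, e < c.*2.+2 -> kn kap (i - c.+1 + e) = kn kap (j - c.+1 + e)) ->
  False.
Proof.
move=> hi hji hjm; pose m' := (j - i).-1.
have hL : m'.+1 = j - i by rewrite /m'; lia.
have hm' : 1 < m' by rewrite /m'; lia.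
have h2rid : 2 * rid < m /\ 2 * rid < m' by rewrite /m' /K in hi hji hjm *; lia.
have hcut : [/\ c.+2 <= i, j + c.+2 <= m & c.+3 <= m'.+1] by rewrite hL; split; lia.
have hcert : [/\ r < i, j + r <= m & r.*2 < m'.+1] by rewrite hL; split; lia.
move=> hKi hKji hKm hcb hacc win.
have hKL : K %| m'.+1 by rewrite hL.
have hU : @loc_unique (GC hm) rid (idC K) by apply: cyc_loc_unique; case: h2rid.
have hU' : @loc_unique (GC' hm') rid (idC' K) by apply: cyc_loc_unique; case: h2rid.
have [hc1 hc2 hc3] := hcut; have [hr1 hr2 hr3] := hcert.
have hacc' := cut_accepts hL hc1 hc2 hc3 hKi hKL win
  (loc_unique_mono hrid hU) (loc_unique_mono hrid hU') hterm hacc.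
have hcb' := cut_cert_bounded (hm' := hm') (ltn0Sn _) hL hr1 hr2 hr3 hcb.
have hXG' : X (GC' hm') by apply/(hX hU'); exists (kC' i kap).
by have [u] := (hB (@cyc_bdeg _ hm' (fun _ => [::]) (fun _ => isT))).1 hXG'.
Qed.

(* The big cycle has length [S * (N + 3)], where [N] is the number of
   possible certificate windows and [S] exceeds the radius needed for the cut. *)
Lemma fooling : False.
Proof.
pose D := c + r + K; pose S := D.*2.+1 * K.
have hDS : D.*2 < S by rewrite /S /K; nia.
have hKS x : K %| S * x by rewrite /S mulnAC dvdn_mull.
clearbody S.
pose b := peval p (r.*2.+1 * K.+2).
pose window_type := {ffun 'I_(c.*2.+2) -> 'I_b.+1 * {ffun 'I_b -> bool}}.
pose N := #|{: window_type}|.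
pose m := S * (N + 3) - 1.
have hmS : m.+1 = S * (N + 3) by rewrite /m; nia.
have hm : 1 < m by rewrite /m; nia.
have hU : @loc_unique (GC hm) rid (idC K).
  by apply: cyc_loc_unique => //; [rewrite hmS | rewrite /m /K; nia].
have hbd : GRAPH_bdeg 3 (GC hm) by apply: cyc_bdeg => v; rewrite /labC; case: ifP.
have [kap [hcb hacc]] : exists kap : 'I_m.+1 -> seq bool,
    @cert_bounded (GC hm) r p (idC K) kap /\ @accepts M (GC hm) (idC K) kap.
  by apply/(hX hU)/(hB hbd); exists ord0.
have kb z : size (kap z) <= b.
  apply: leq_trans (hcb z) (peval_mono _ _).
  apply: (@ball_weight_small_labels m K r hm (@labC m) (ltn0Sn _) z); first nia.
  by move=> v; rewrite /labC; case: ifP.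
pose f (a : 'I_N.+1) : window_type :=
  [ffun e : 'I_(c.*2.+2) => bounded_code b (kn kap (S * a.+1 - c.+1 + e))].
have [lo [hi [hlohi hf]]] := pigeonhole f.
have hhi : hi < N.+1 := ltn_ord hi.
have hji : S * hi.+1 - S * lo.+1 = S * (hi - lo) by rewrite -mulnBr.
have hSlo : S <= S * lo.+1 by rewrite leq_pmulr.
have hShi : S * hi.+1 + S * 2 <= S * (N + 3).
  by rewrite -mulnDr leq_mul2l; apply/orP; right; lia.
have hSji : S <= S * (hi - lo) by rewrite leq_pmulr // subn_gt0.
apply: (@cut_contradiction m hm kap (S * lo.+1) (S * hi.+1)); rewrite ?hji ?hmS ?hKS //; try lia.
move=> e he; apply: (@bounded_code_inj b); rewrite ?kb //.
by move: (congr1 (fun g : window_type => g (Ordinal he)) hf); rewrite !ffunE.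
Qed.

End Fooling.

Definition all_empty (G : graph) : Prop := forall u : gV G, glab u = [::].

Lemma all_empty_property : is_property all_empty.
Proof. by move=> G H [f [[g fg gf] [_ hl]]] hG v; rewrite -(gf v) hl hG. Qed.

Lemma all_empty_LP : LP all_empty.
Proof.
split; first exact: all_empty_property.
by exists M0, 1; split; [exact: M0_local_poly | split => // G id hu; exact: M0_accepts].
Qed.

Lemma all_empty_NLP : NLP all_empty.
Proof.
split; first exact: all_empty_property.
exists M0, 1, 1, [::]; split; first exact: M0_local_poly.
split => //; split => // G id hu; split.
  by move=> h; exists (fun _ => [::]); split => //; apply/M0_accepts.
by move=> [k [_ /(M0_accepts k hu)]].
Qed.

Lemma not_all_empty (G : graph) : ~ all_empty G <-> exists u : gV G, glab u != [::].
Proof.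
split; last by move=> [u hu] h; rewrite h in hu.
move=> h; apply: NNPP => hn; apply: h => u; apply/eqP; apply: negbNE; apply/negP => hu.
by apply: hn; exists u.
Qed.

Lemma LP_as_certified P : LP P -> exists M rid, local_poly M /\ 1 <= rid /\
  forall (G : graph) (id : gV G -> seq bool), loc_unique rid id ->
    (P G <-> exists kappa, cert_bounded 1 [::] id kappa /\ accepts M id kappa).
Proof.
move=> [_ [M [rid [hl [hr h]]]]]; exists M, rid; split => //; split => // G id hu.
rewrite -(h G id hu); split; first by move=> a; exists (fun _ => [::]).
move=> [k [hk a]]; have -> : (fun _ : gV G => [::] : seq bool) = k => //.
by apply: functional_extensionality => u; move: (hk u); rewrite leqn0 size_eq0 => /eqP.
Qed.

Lemma nonempty_label_not_certifiable (M : dtm) rid r p (X : graph -> Prop) :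
  local_poly M -> 1 <= rid ->
  (forall (G : graph) (id : gV G -> seq bool), loc_unique rid id ->
     (X G <-> exists kappa, cert_bounded r p id kappa /\ accepts M id kappa)) ->
  (forall G, GRAPH_bdeg 3 G -> (X G <-> ~ all_empty G)) -> False.
Proof.
move=> [c [q hlp]] hrid hX hB.
apply: (fooling (c := c) hrid _ hX) => [G id kappa hu|G hG].
  by case: (hlp G id kappa hu).
by rewrite -not_all_empty; exact: hB.
Qed.

Lemma bdeg_mono a b G : a <= b -> GRAPH_bdeg a G -> GRAPH_bdeg b G.
Proof. by move=> hab hG u; exact: leq_trans (hG u) hab. Qed.

Lemma restrict_incl (C D : (graph -> Prop) -> Prop) B :
  class_incl C D -> class_incl (restrict C B) (restrict D B).
Proof. by move=> H Q [P [hP e]]; exists P; split => //; exact: H. Qed.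

Lemma coLP_not_in_NLP Delta : 3 <= Delta ->
  ~ class_incl (restrict coLP (GRAPH_bdeg Delta)) (restrict NLP (GRAPH_bdeg Delta)).
Proof.
move=> hD H.
have hQ : restrict coLP (GRAPH_bdeg Delta) (fun G => ~ all_empty G /\ GRAPH_bdeg Delta G).
  by exists (fun G => ~ all_empty G); split => //; exists all_empty; split => //; exact: all_empty_LP.
have [P [[_ [M [rid [r [p [hl [hrid [_ h]]]]]]]] e]] := H _ hQ.
apply: (nonempty_label_not_certifiable hl hrid h) => G hG.
have hB := bdeg_mono hD hG; split.
  by move=> hP; have /e [] : P G /\ GRAPH_bdeg Delta G by [].
by move=> hn; have /e [] : ~ all_empty G /\ GRAPH_bdeg Delta G by [].
Qed.

(* [all_empty] is in NLP but its complement is not in NLP, hence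
   [all_empty] is not in coLP, on GRAPH_Delta. *)
Lemma NLP_not_in_coLP Delta : 3 <= Delta ->
  ~ class_incl (restrict NLP (GRAPH_bdeg Delta)) (restrict coLP (GRAPH_bdeg Delta)).
Proof.
move=> hD H.
have hQ : restrict NLP (GRAPH_bdeg Delta) (fun G => all_empty G /\ GRAPH_bdeg Delta G).
  by exists all_empty; split => //; exact: all_empty_NLP.
have [P [[P' [hP' eP']] e]] := H _ hQ.
have [M [rid [hl [hrid h]]]] := LP_as_certified hP'.
apply: (nonempty_label_not_certifiable hl hrid h) => G hG.
have hB := bdeg_mono hD hG; split.
  by move=> hP'G hA; have /e [] : all_empty G /\ GRAPH_bdeg Delta G by []; move/eP'.
move=> hn; apply: NNPP => hn'; apply: hn.
by have /e [] // : P G /\ GRAPH_bdeg Delta G by split => //; exact/eP'.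
Qed.

Theorem proposition9p3 :
  (forall Delta : nat, 3 <= Delta ->
     ~ class_incl (restrict coLP (GRAPH_bdeg Delta)) (restrict NLP (GRAPH_bdeg Delta)) /\
     ~ class_incl (restrict NLP (GRAPH_bdeg Delta)) (restrict coLP (GRAPH_bdeg Delta))) /\
  (~ class_incl coLP NLP /\ ~ class_incl NLP coLP).
Proof.
split; first by move=> Delta hD; split; [exact: coLP_not_in_NLP | exact: NLP_not_in_coLP].
split => H.
- exact: (coLP_not_in_NLP (leqnn 3) (restrict_incl H)).
- exact: (NLP_not_in_coLP (leqnn 3) (restrict_incl H)).
Qed.
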